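(* Let $\mathcal H$ be a finite-dimensional Hilbert space, let $P$ be an orthogonal projection on $\mathcal H$, and let $\mathcal E$ be a channel on $\mathcal L(\mathcal H)$ with operation elements $\{E_a\}$, i.e. $\mathcal E(\rho)=\sum_a E_a\rho E_a^\dagger$ with $\sum_a E_a^\dagger E_a={\bf 1}$. Let $\mathcal A$ be a subalgebra of $\mathcal L(P\mathcal H)$ closed under Hermitian conjugation, where operators on $P\mathcal H$ are regarded as operators $X$ on $\mathcal H$ with $X=PXP$ ($\mathcal A$ need not contain $P$). Then $\mathcal A$ is conserved by $\mathcal E$ for states in $P\mathcal H$, i.e. $$P\,\mathcal E^\dagger(X)\,P = PXP \quad\text{for all } X\in\mathcal A,$$ if and only if $[E_aP, X]=E_aPX-XE_aP=0$ for all operation elements $E_a$ and all $X\in\mathcal A$.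
   Context: $\mathcal L(\mathcal K)$ denotes the set of all linear operators on a Hilbert space $\mathcal K$. A channel is a completely positive trace-preserving linear map on $\mathcal L(\mathcal H)$; its dual (Heisenberg-picture) map is the unital completely positive map $\mathcal E^\dagger(X)=\sum_a E_a^\dagger X E_a$, characterized by $\mathrm{Tr}(\rho\,\mathcal E^\dagger(X))=\mathrm{Tr}(\mathcal E(\rho)X)$. *)

From HB Require Import structures.
From mathcomp Require Import all_boot all_order all_algebra.
From mathcomp Require Import sesquilinear.
Set Implicit Arguments. Unset Strict Implicit. Unset Printing Implicit Defensive.
Import Order.TTheory GRing.Theory Num.Theory.
Local Open Scope ring_scope.
Local Open Scope sesquilinear_scope.

(* The Hilbert space H is C^n, C an algebraically closed numeric field
   (e.g. the complex numbers); operators on H are n x n matrices, and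
   M ^t* is the Hermitian adjoint (conjugate transpose). *)

Definition orth_proj (C : numClosedFieldType) (n : nat) (P : 'M[C]_n) : Prop :=
  P *m P = P /\ P ^t* = P.

Definition kraus_channel (C : numClosedFieldType) (n m : nat)
  (E : 'I_m -> 'M[C]_n) : Prop :=
  \sum_(a < m) (E a) ^t* *m E a = 1%:M.

Definition channel_apply (C : numClosedFieldType) (n m : nat)
  (E : 'I_m -> 'M[C]_n) (rho : 'M[C]_n) : 'M[C]_n :=
  \sum_(a < m) E a *m rho *m (E a) ^t*.

Definition channel_dual (C : numClosedFieldType) (n m : nat)
  (E : 'I_m -> 'M[C]_n) (X : 'M[C]_n) : 'M[C]_n :=
  \sum_(a < m) (E a) ^t* *m X *m E a.

Definition star_subalgebra (C : numClosedFieldType) (n : nat)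
  (A : 'M[C]_n -> Prop) : Prop :=
  [/\ A 0,
      (forall X Y, A X -> A Y -> A (X + Y)),
      (forall (c : C) X, A X -> A (c *: X)),
      (forall X Y, A X -> A Y -> A (X *m Y)) &
      (forall X, A X -> A (X ^t*))].

Definition supported_on (C : numClosedFieldType) (n : nat)
  (P : 'M[C]_n) (A : 'M[C]_n -> Prop) : Prop :=
  forall X, A X -> X = P *m X *m P.

From HB Require Import structures.
From mathcomp Require Import all_boot all_order all_algebra.
From mathcomp Require Import sesquilinear.
Set Implicit Arguments. Unset Strict Implicit. Unset Printing Implicit Defensive.
Import Order.TTheory GRing.Theory Num.Theory.
Local Open Scope ring_scope.
Local Open Scope sesquilinear_scope.

(* Write F_a = E_a P and D(Y) = sum_a F_a† Y F_a = P E†(Y) P, so D(1) = P.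
   For any X the Gram sum of the commutators expands as
     sum_a [F_a, X]† [F_a, X] = X† D(1) X - X† D(X) - D(X†) X + D(X† X).
   If D fixes the *-algebra A pointwise, then for X in A every term on the
   right is ± X† X and the sum vanishes; a vanishing sum of positive
   matrices M† M forces each commutator to vanish.  Conversely, if every
   F_a commutes with X then D(X) = D(1) X = P X = X. *)

Section ConjugateTranspose.
Variable C : numClosedFieldType.

Lemma trmxC_mul m n p (A : 'M[C]_(m, n)) (B : 'M[C]_(n, p)) :
  (A *m B) ^t* = B ^t* *m A ^t*.
Proof. by rewrite trmx_mul map_mxM. Qed.

Lemma trmxCB m n (A B : 'M[C]_(m, n)) : (A - B) ^t* = A ^t* - B ^t*.
Proof. by rewrite linearB map_mxB. Qed.

Lemma trmxC_mul_diag m n (M : 'M[C]_(m, n)) j :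
  (M ^t* *m M) j j = \sum_i `|M i j| ^+ 2.
Proof. by rewrite !mxE; apply: eq_bigr => i _; rewrite !mxE -normCKC. Qed.

Lemma sum_trmxC_mul_eq0 (I : finType) m n (M : I -> 'M[C]_(m, n)) :
  \sum_a (M a) ^t* *m M a = 0 -> forall a, M a = 0.
Proof.
move=> sum_eq0 a; apply/matrixP=> i j; rewrite mxE.
have sqr_ge0 b k : 0 <= `|M b k j| ^+ 2 by rewrite exprn_ge0.
have col_ge0 b : 0 <= \sum_k `|M b k j| ^+ 2 by apply: sumr_ge0.
have /matrixP /(_ j j) := sum_eq0; rewrite summxE mxE.
under eq_bigr => b _ do rewrite trmxC_mul_diag.
move=> /(psumr_eq0P (fun b _ => col_ge0 b)) /(_ a isT).
move=> /(psumr_eq0P (fun k _ => sqr_ge0 a k)) /(_ i isT) /eqP.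
by rewrite expf_eq0 normr_eq0 => /andP[_ /eqP].
Qed.

End ConjugateTranspose.

Section ChannelDual.
Variables (C : numClosedFieldType) (n m : nat).
Implicit Types (E F : 'I_m -> 'M[C]_n) (Q X : 'M[C]_n).

Definition commutator_mx (A B : 'M[C]_n) : 'M[C]_n := A *m B - B *m A.

Lemma channel_dual_mulmxr E Q X :
  channel_dual (fun a => E a *m Q) X = Q ^t* *m channel_dual E X *m Q.
Proof.
rewrite /channel_dual mulmx_sumr mulmx_suml; apply: eq_bigr => a _.
by rewrite trmxC_mul !mulmxA.
Qed.

Lemma channel_dual1 E : kraus_channel E -> channel_dual E 1%:M = 1%:M.
Proof.
move=> kraus_E; rewrite /channel_dual -[RHS]kraus_E.
by apply: eq_bigr => a _; rewrite mulmx1.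
Qed.

Lemma channel_dual_commute F X :
  (forall a, commutator_mx (F a) X = 0) ->
  channel_dual F X = channel_dual F 1%:M *m X.
Proof.
move=> commFX; rewrite /channel_dual mulmx_suml; apply: eq_bigr => a _.
have /subr0_eq commFaX := commFX a.
by rewrite mulmx1 -!mulmxA commFaX.
Qed.

Lemma sum_gram_commutator_mx F X :
  \sum_a (commutator_mx (F a) X) ^t* *m commutator_mx (F a) X =
  X ^t* *m channel_dual F 1%:M *m X - X ^t* *m channel_dual F X
  - channel_dual F (X ^t*) *m X + channel_dual F (X ^t* *m X).
Proof.
rewrite /channel_dual mulmx_sumr !mulmx_suml mulmx_sumr -!sumrB -big_split /=.
apply: eq_bigr => a _; rewrite /commutator_mx trmxCB !trmxC_mul.
by rewrite !mulmxBl !mulmxBr !mulmxA mulmx1 opprD opprK addrA.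
Qed.

Lemma commutator_mx_eq0_of_fixed F X :
  channel_dual F 1%:M *m X = X -> channel_dual F X = X ->
  channel_dual F (X ^t*) = X ^t* -> channel_dual F (X ^t* *m X) = X ^t* *m X ->
  forall a, commutator_mx (F a) X = 0.
Proof.
move=> fix1 fixX fixXt fixXtX; apply: sum_trmxC_mul_eq0.
rewrite sum_gram_commutator_mx -(mulmxA (X ^t*)) fix1 fixX fixXt fixXtX.
by rewrite subrr sub0r addNr.
Qed.

End ChannelDual.

Theorem theorem1 (C : numClosedFieldType) (n m : nat)
  (P : 'M[C]_n) (E : 'I_m -> 'M[C]_n) (A : 'M[C]_n -> Prop) :
  orth_proj P ->
  kraus_channel E ->
  star_subalgebra A ->
  supported_on P A ->
  (forall X, A X -> P *m channel_dual E X *m P = P *m X *m P) <->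
  (forall (a : 'I_m) X, A X -> E a *m P *m X - X *m (E a *m P) = 0).
Proof.
move=> [idemP herP] kraus_E [_ _ _ mulA adjA] suppA.
pose F a := E a *m P.
have compressE X : P *m channel_dual E X *m P = channel_dual F X.
  by rewrite channel_dual_mulmxr herP.
have F1 : channel_dual F 1%:M = P.
  by rewrite -compressE channel_dual1 // mulmx1 idemP.
have PX X : A X -> P *m X = X by move=> /suppA ->; rewrite !mulmxA idemP.
have fixedE X : A X -> P *m X *m P = X by move=> /suppA <-.
split=> [fixA a X AX | commA X AX].
- have fixF Y : A Y -> channel_dual F Y = Y.
    by move=> AY; rewrite -compressE fixA // fixedE.
  apply: (commutator_mx_eq0_of_fixed (F := F)); rewrite ?F1 ?PX ?fixF //.
    exact: adjA.
  exact: mulA (adjA _ AX) AX.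
- rewrite compressE fixedE // channel_dual_commute ?F1 ?PX // => a.
  exact: commA.
Qed.
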